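(* Let $C$ be a set of concepts over $\{0,1\}^n$, let $S\subseteq\{0,1\}^n$ with $|S|=d$ be a set shattered by $C$. Let $\mathcal{N}$ be a quantum network with quantum membership oracle gates such that for every $c\in C$, if the oracle gates of $\mathcal{N}$ are $QMQ_c$ gates, then with probability at least $2/3$ the output of $\mathcal{N}$ is a representation of a Boolean circuit $h$ whose relative distance from $c$ on $S$ is at most $1/10$. Then the query complexity of $\mathcal{N}$ is at least $\frac{d}{12n}$.
   Context: A set $S\subseteq\{0,1\}^n$ is shattered by $C$ if for every $U\subseteq S$ there is $c\in C$ with $\{x\in S: c(x)=1\}=U$. The relative distance of Boolean functions $h$ and $c$ on $S$ is the fraction of points of $S$ on which they disagree. A quantum network on an $m$-qubit register is a sequence $U_0,O_1,U_1,\dots,O_T,U_T$ of unitaries applied to $|0^m\rangle$, the $U_i$ arbitrary fixed unitaries and each $O_i$ an oracle gate, followed by a computational-basis measurement of some qubits whose outcome is the output; $T$ is the query complexity. The gate $QMQ_c$ maps basis state $|x,b,y\rangle$ ($x\in\{0,1\}^n$, $b\in\{0,1\}$) to $|x,b\oplus c(x),y\rangle$. *)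

From HB Require Import structures.
From mathcomp Require Import all_boot all_order all_algebra.
From mathcomp Require Import complex.
From mathcomp Require Import reals.
Set Implicit Arguments. Unset Strict Implicit. Unset Printing Implicit Defensive.
Import Order.TTheory GRing.Theory Num.Theory.
Local Open Scope ring_scope.

Definition point (n : nat) := {ffun 'I_n -> bool}.
Definition boolfun (n : nat) := {ffun point n -> bool}.

Definition shattered (n : nat) (C : {set boolfun n}) (S : {set point n}) :=
  forall U : {set point n}, U \subset S ->
    exists2 c, c \in C & [set x in S | c x] = U.

Definition rel_dist (R : realType) (n : nat) (S : {set point n}) (h c : boolfun n) : R :=
  #|[set x in S | h x != c x]|%:R / #|S|%:R.

(* Register of m = n + 1 + k qubits: qubits 0..n-1 hold x, qubit n holds b,
   the remaining k qubits hold y.  Basis states are bit strings. *)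
Definition qreg (n k : nat) := (n.+1 + k)%N.
Definition basis (n k : nat) := {ffun 'I_(qreg n k) -> bool}.
Definition dimH (n k : nat) := #|{: basis n k}|.

Definition bidx (n k : nat) (z : basis n k) : 'I_(dimH n k) := enum_rank z.

Section Q.
Variable R : realType.
Local Notation C := (R[i]).

Definition unitary (N : nat) (U : 'M[C]_N) : Prop :=
  U *m (map_mx (fun z : C => z^*) U)^T = 1%:M.

Definition xpart (n k : nat) (z : basis n k) : point n :=
  [ffun i : 'I_n => z (lshift k (widen_ord (leqnSn n) i))].

Definition bqubit (n k : nat) : 'I_(qreg n k) := lshift k (@ord_max n).

Definition qmq_basis (n k : nat) (c : boolfun n) (z : basis n k) : basis n k :=
  [ffun i => if i == bqubit n k then z i (+) c (xpart z) else z i].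

Definition QMQ (n k : nat) (c : boolfun n) : 'M[C]_(dimH n k) :=
  \matrix_(i, j) (if enum_val i == qmq_basis c (enum_val j) then 1 else 0).

Definition ket0 (n k : nat) : 'cV[C]_(dimH n k) :=
  \col_i (if enum_val i == [ffun=> false] then 1 else 0).

Fixpoint run (n k : nat) (Us : nat -> 'M[C]_(dimH n k)) (O : 'M[C]_(dimH n k))
  (t : nat) : 'cV[C]_(dimH n k) :=
  match t with
  | 0 => Us 0%N *m ket0 n k
  | t'.+1 => Us t *m (O *m run Us O t')
  end.

(* Outcome of measuring the qubits in M on basis state z (unmeasured qubits
   are reported as 0, i.e. the outcome is z restricted to M). *)
Definition outcome (n k : nat) (M : {set 'I_(qreg n k)}) (z : basis n k) : basis n k :=
  [ffun i => (i \in M) && z i].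

Definition success_prob (n k : nat) (Us : nat -> 'M[C]_(dimH n k)) (T : nat)
  (M : {set 'I_(qreg n k)}) (decode : basis n k -> option (boolfun n))
  (O : 'M[C]_(dimH n k)) (good : boolfun n -> bool) : C :=
  \sum_(z : basis n k)
     (if decode (outcome M z) is Some h then
        (if good h then `|run Us O T (bidx z) 0| ^+ 2 else 0)
      else 0).
End Q.

From HB Require Import structures.
From mathcomp Require Import all_boot all_order all_algebra.
From mathcomp Require Import complex.
From mathcomp Require Import reals.
From mathcomp Require Import ring lra zify.
Import Order.TTheory GRing.Theory Num.Theory.
Local Open Scope ring_scope.

(* Polynomial method in linear-algebraic form.  Index by the 2^d subsets U
   of S a family of concepts c_U in C realising U on S.  Since QMQ_c is affine
   in the truth table of c, every query multiplies by at most 2^n + 1 the rank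
   of the matrix whose rows are the final states for the c_U; the matrix P of
   outcome probabilities, their entrywise squared moduli, thus has rank at most
   D = (2^n + 1)^(2T).  Multiplying P by the 0/1 matrix telling which concepts
   an outcome is 1/10-close to on S gives a 2^d x 2^d matrix B with entries in
   [0, 1], trace >= (2/3) 2^d and row sums at most the size K of a Hamming ball
   of radius d/10, where K 9^(d - d/10) <= 10^d.  The inequality
   tr(B)^2 <= rank(B) |B|_F^2 yields 4 2^d <= 9 D K, impossible if d > 12 n T. *)

Lemma mxrank_sum_leq {F : fieldType} {m p} {I : finType} (P : pred I)
    (A : I -> 'M[F]_(m, p)) :
  (\rank (\sum_(i | P i) A i)%R <= \sum_(i | P i) \rank (A i))%N.
Proof.
apply: (big_ind2 (fun M r => \rank M <= r)%N) => //; first by rewrite mxrank0.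
by move=> A1 r1 A2 r2 le1 le2; apply: leq_trans (mxrank_add _ _) (leq_add le1 le2).
Qed.

(* Through a rank factorisation A = X Y, the entry |A a b|^2 expands as a sum
   of (rank A)^2 rank-one matrices. *)
Lemma mxrank_sqr_norm {C : numClosedFieldType} {m p} (A : 'M[C]_(m, p)) :
  (\rank (\matrix_(a, b) `|A a b| ^+ 2) <= \rank A ^ 2)%N.
Proof.
suff sqr_norm_mul r (X : 'M[C]_(m, r)) (Y : 'M[C]_(r, p)) :
    (\rank (\matrix_(a, b) `|(X *m Y) a b| ^+ 2) <= r ^ 2)%N.
  by have := sqr_norm_mul _ (col_base A) (row_base A); rewrite mulmx_base.
have -> : \matrix_(a, b) `|(X *m Y) a b| ^+ 2 =
    \sum_(u < r) \sum_(v < r) \col_a (X a u * (X a v)^*) *m \row_b (Y u b * (Y v b)^*).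
  apply/matrixP => a b; rewrite !mxE normCK summxE rmorph_sum mulr_suml.
  apply: eq_bigr => u _; rewrite summxE mulr_sumr; apply: eq_bigr => v _.
  by rewrite !mxE big_ord1 !mxE rmorphM /=; ring.
apply: leq_trans (mxrank_sum_leq _ _) _.
apply: (@leq_trans (\sum_(u < r) \sum_(v < r) 1)%N); last first.
  by rewrite !sum_nat_const !card_ord muln1 mulnn.
apply: leq_sum => u _; apply: leq_trans (mxrank_sum_leq _ _) _.
apply: leq_sum => v _.
exact: leq_trans (mxrankM_maxl _ _) (rank_leq_col _).
Qed.

Section TraceRank.
Context {R : realFieldType}.

Lemma sqr_sum_mul_le (I : finType) (a b : I -> R) :
  (\sum_i a i * b i) ^+ 2 <= (\sum_i a i ^+ 2) * (\sum_i b i ^+ 2).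
Proof.
pose g i j := a i ^+ 2 * b j ^+ 2 - a i * b i * (a j * b j).
have gE : (\sum_i a i ^+ 2) * (\sum_i b i ^+ 2) - (\sum_i a i * b i) ^+ 2 =
    \sum_i \sum_j g i j.
  rewrite expr2 !mulr_suml -sumrB; apply: eq_bigr => i _.
  by rewrite !mulr_sumr -sumrB.
have lagrange : \sum_i \sum_j (a i * b j - a j * b i) ^+ 2 =
    \sum_i \sum_j (g i j + g j i).
  by apply: eq_bigr => i _; apply: eq_bigr => j _; rewrite /g; ring.
have : 0 <= \sum_i \sum_j (g i j + g j i).
  rewrite -lagrange; apply: sumr_ge0 => i _; apply: sumr_ge0 => j _.
  exact: sqr_ge0.
under eq_bigr do rewrite big_split.
rewrite big_split /= {1}exchange_big -mulr2n exchange_big -gE.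
by rewrite pmulrn_lge0 // subr_ge0.
Qed.

Lemma mulmx_trmx_eq0 m (w : 'rV[R]_m) : w *m w^T = 0 -> w = 0.
Proof.
move=> /matrixP/(_ 0 0); rewrite !mxE => /eqP.
rewrite psumr_eq0 => [/allP w0|j _]; last by rewrite mxE -expr2 sqr_ge0.
apply/matrixP => i j; rewrite ord1 mxE.
by move/implyP: (w0 j (mem_index_enum _)) => /(_ isT); rewrite mxE -expr2 sqrf_eq0 => /eqP.
Qed.

Section ColumnProjection.
Variables (m r : nat) (X : 'M[R]_(m, r)).
Hypothesis X_full : row_full X.

Lemma gram_unitmx : X^T *m X \in unitmx.
Proof.
have XT_free : row_free X^T by rewrite /row_free mxrank_tr.
rewrite -row_free_unit; apply: inj_row_free => v vG0.
apply: (row_free_inj XT_free); rewrite mul0mx; apply: mulmx_trmx_eq0.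
by rewrite trmx_mul trmxK !mulmxA -(mulmxA v) vG0 mul0mx.
Qed.

Definition colproj := X *m invmx (X^T *m X) *m X^T.

Lemma colprojK : colproj *m X = X.
Proof. by rewrite -!mulmxA mulVmx ?gram_unitmx // mulmx1. Qed.

Lemma trmx_colproj : colproj^T = colproj.
Proof.
by rewrite !trmx_mul trmxK trmx_inv trmx_mul trmxK mulmxA.
Qed.

Lemma colproj_idem : colproj *m colproj = colproj.
Proof. by rewrite {2}/colproj !mulmxA colprojK. Qed.

Lemma mxtrace_colproj : \tr colproj = r%:R.
Proof. by rewrite mxtrace_mulC mulmxA mulmxV ?gram_unitmx // mxtrace1. Qed.

Lemma sum_sqr_colproj : \sum_i \sum_j colproj i j ^+ 2 = r%:R.
Proof.
rewrite -mxtrace_colproj -[in RHS]colproj_idem -[X in \tr (_ *m X)]trmx_colproj.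
apply: eq_bigr => i _; rewrite mxE.
by apply: eq_bigr => j _; rewrite [colproj^T _ _]mxE expr2.
Qed.

Lemma sqr_mxtrace_mul_le (Y : 'M[R]_(r, m)) :
  (\tr (X *m Y)) ^+ 2 <= r%:R * \sum_i \sum_j (X *m Y) i j ^+ 2.
Proof.
set B := X *m Y.
have PB : colproj *m B = B by rewrite mulmxA colprojK.
have -> : \tr B = \sum_(p : 'I_m * 'I_m) colproj p.1 p.2 * B p.2 p.1.
  rewrite -{1}PB -(pair_bigA _ (fun i j => colproj i j * B j i)).
  by apply: eq_bigr => i _; rewrite mxE.
rewrite -sum_sqr_colproj [X in _ <= _ * X]exchange_big !pair_bigA /=.
exact: sqr_sum_mul_le.
Qed.

End ColumnProjection.

Lemma sqr_mxtrace_le_rank m (B : 'M[R]_m) :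
  (\tr B) ^+ 2 <= (\rank B)%:R * \sum_i \sum_j B i j ^+ 2.
Proof. by rewrite -{1 3}(mulmx_base B); apply/sqr_mxtrace_mul_le/col_base_full. Qed.

End TraceRank.

Section Learning.
Context {R : realFieldType} {N m K : nat} {P : 'M[R]_(N, m)} {win : 'I_m -> pred 'I_N}.
Hypotheses (P_ge0 : forall a j, 0 <= P a j) (P_row1 : forall a, \sum_j P a j = 1).
Hypothesis win_card : forall j, (#|win j| <= K)%N.
Hypothesis P_success : forall a, 2 / 3 <= \sum_(j | win j a) P a j.

Definition win_mx : 'M[R]_(m, N) := \matrix_(j, b) (win j b)%:R.

Local Notation B := (P *m win_mx).

Lemma win_mxE a b : B a b = \sum_(j | win j b) P a j.
Proof.
rewrite mxE [RHS]big_mkcond; apply: eq_bigr => j _.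
by rewrite mxE; case: (win j b); rewrite ?mulr1 ?mulr0.
Qed.

Lemma win_mx_ge0 a b : 0 <= B a b.
Proof. by rewrite win_mxE sumr_ge0. Qed.

Lemma win_mx_le1 a b : B a b <= 1.
Proof.
rewrite win_mxE -(P_row1 a) [X in _ <= X](bigID (win^~ b)) /= lerDl.
exact: sumr_ge0.
Qed.

Lemma win_mx_row_sum a : \sum_b B a b <= K%:R.
Proof.
have -> : \sum_b B a b = \sum_j P a j * #|win j|%:R.
  under eq_bigr do rewrite mxE.
  rewrite exchange_big /=; apply: eq_bigr => j _.
  rewrite -mulr_sumr -sum1_card natr_sum [X in _ = _ * X]big_mkcond; congr (_ * _).
  apply: eq_bigr => b _; rewrite mxE unfold_in; by case: (win j b).
apply: (@le_trans _ _ (\sum_j P a j * K%:R)).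
  by apply: ler_sum => j _; rewrite ler_wpM2l ?ler_nat.
by rewrite -mulr_suml P_row1 mul1r.
Qed.

Lemma win_mx_trace : 2 / 3 * N%:R <= \tr B.
Proof.
rewrite -[in X in _ * X](card_ord N) -sumr_const mulr_sumr.
by apply: ler_sum => a _; rewrite mulr1 win_mxE.
Qed.

Lemma learning_rank_bound : (4 * N <= 9 * \rank P * K)%N.
Proof.
have frob : \sum_a \sum_b B a b ^+ 2 <= (N * K)%:R.
  rewrite natrM -[in X in X * _](card_ord N) -sumr_const mulr_suml.
  apply: ler_sum => a _; rewrite mul1r; apply: le_trans (win_mx_row_sum a).
  by apply: ler_sum => b _; rewrite expr2 ler_piMr ?win_mx_ge0 ?win_mx_le1.
have trace_ge0 : 0 <= 2 / 3 * N%:R :> R by rewrite mulr_ge0 ?divr_ge0 ?ler0n.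
have trace_sq : (2 / 3 * N%:R) ^+ 2 <= (\tr B) ^+ 2.
  by rewrite ler_sqr ?nnegrE ?win_mx_trace ?(le_trans trace_ge0 win_mx_trace).
have rank_le : (\rank B)%:R <= (\rank P)%:R :> R by rewrite ler_nat mxrankM_maxl.
have frob_ge0 : 0 <= \sum_a \sum_b B a b ^+ 2.
  by apply: sumr_ge0 => a _; apply: sumr_ge0 => b _; exact: sqr_ge0.
have := le_trans trace_sq (sqr_mxtrace_le_rank _ B).
move=> /le_trans/(_ (ler_pM (ler0n _ _) frob_ge0 rank_le frob)).
have [N0|N_gt0] := posnP N; first by move=> _; rewrite {1}N0.
have : 0 < N%:R :> R by rewrite ltr0n.
by rewrite -(ler_nat R) !natrM; nra.
Qed.

(* With no dependence on the concept, the trace is itself a row sum. *)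
Lemma learning_const_bound :
  (forall a b j, P a j = P b j) -> (2 * N <= 3 * K)%N.
Proof.
move=> P_const; have [N0|N_gt0] := posnP N; first by rewrite {1}N0.
have trace_le : \tr B <= K%:R.
  have -> : \tr B = \sum_a B (Ordinal N_gt0) a.
    by apply: eq_bigr => a _; rewrite !win_mxE; apply: eq_bigr => j _.
  exact: win_mx_row_sum.
have := le_trans win_mx_trace trace_le.
by rewrite -(ler_nat R) !natrM; lra.
Qed.

End Learning.

Lemma card_set (T : finType) : #|{set T}| = (2 ^ #|T|)%N.
Proof. by have := card_powerset [set: T]; rewrite powersetT !cardsT. Qed.

Lemma card_enum_val (T : finType) (A : {pred T}) (P : pred T) :
  #|[set i : 'I_#|A| | P (enum_val i)]| = #|[set x in A | P x]|.
Proof.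
rewrite -(card_imset _ enum_val_inj); apply: eq_card => x; rewrite inE.
apply/imsetP/andP => [[i Pi ->]|[xA Px]].
  by rewrite inE in Pi; rewrite enum_valP.
by exists (enum_rank_in xA x); rewrite ?inE enum_rankK_in.
Qed.

Lemma card_hamming_ball (T : finType) (H : {set T}) (small : pred nat) :
  #|[set V : {set T} | small #|[set i | (i \in V) != (i \in H)]|]| =
  #|[set W : {set T} | small #|W|]|.
Proof.
pose flip (V : {set T}) := [set i | (i \in V) != (i \in H)].
have flipK : involutive flip.
  by move=> V; apply/setP => i; rewrite !inE; case: (i \in V); case: (i \in H).
rewrite -[RHS](card_preimset _ (inv_inj flipK)); apply: eq_card => V.
by rewrite !inE.
Qed.

Lemma sum_set_by_card (T : finType) (f : nat -> nat) :
  (\sum_(W : {set T}) f #|W| = \sum_(j < #|T|.+1) 'C(#|T|, j) * f j)%N.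
Proof.
rewrite (partition_big (fun W : {set T} => inord #|W| : 'I_#|T|.+1) predT) //=.
apply: eq_bigr => j _.
have inordE (W : {set T}) : nat_of_ord (inord #|W| : 'I_#|T|.+1) = #|W|.
  by rewrite inordK // ltnS max_card.
rewrite (eq_bigr (fun _ => f j)) => [|W /eqP <-]; last by rewrite inordE.
rewrite sum_nat_const -card_draws; congr (_ * _)%N.
by apply: eq_card => W; rewrite unfold_in /= inordE inE.
Qed.

Lemma sum_set_exp_card (T : finType) (a : nat) :
  (\sum_(W : {set T}) a ^ (#|T| - #|W|) = a.+1 ^ #|T|)%N.
Proof.
rewrite (sum_set_by_card _ (fun j => a ^ (#|T| - j)))%N -[a.+1]addn1 expnDn.
by apply: eq_bigr => j _; rewrite exp1n muln1.
Qed.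

(* Each small set carries weight a^(|T| - |W|) >= a^(|T| - |T|/b) in the
   binomial expansion of (a + 1)^|T|. *)
Lemma card_small_sets_le (T : finType) (a b : nat) : (0 < a)%N -> (0 < b)%N ->
  (#|[set W : {set T} | b * #|W| <= #|T|]| * a ^ (#|T| - #|T| %/ b)
     <= a.+1 ^ #|T|)%N.
Proof.
move=> a_gt0 b_gt0; rewrite -sum_set_exp_card -sum1_card big_distrl /=.
apply: (@leq_trans (\sum_(W in [set W : {set T} | b * #|W| <= #|T|]) a ^ (#|T| - #|W|))%N).
  apply: leq_sum => W; rewrite inE => small; rewrite mul1n leq_pexp2l //.
  by apply: leq_sub2l; rewrite leq_divRL // mulnC.
by rewrite big_mkcond /=; apply: leq_sum => W _; case: ifP.
Qed.

Section Arithmetic.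
Local Open Scope nat_scope.

(* Constants such as 10 ^ 30 must never be unfolded, nat being unary: numeric
   facts go through lia, and exponent rewrites target explicit patterns. *)

Lemma leq_wexp2r m n e : m <= n -> m ^ e <= n ^ e.
Proof. by move=> le_mn; elim: e => // e IH; rewrite !expnS leq_mul. Qed.

Lemma ltn_geometric a b m X Y d e : 0 < m -> 0 < Y -> e <= d -> m * Y <= X ->
  b < a * m ^ e -> b * Y ^ d < a * X ^ d.
Proof.
move=> m_gt0 Y_gt0 le_ed le_mYX lt_b.
apply: (@leq_trans (a * m ^ e * Y ^ d)); first by rewrite ltn_pmul2r ?expn_gt0 ?Y_gt0.
rewrite -mulnA leq_mul2l; apply/orP; right.
apply: (@leq_trans ((m * Y) ^ d)); last exact: leq_wexp2r.
by rewrite expnMn leq_mul2r leq_pexp2l ?orbT.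
Qed.

(* Both bounds compare 2^d 9^(d - d/10) with 10^d; per ten coordinates the
   ratio gains 2^10 9^9 / 10^10 > 39, and 2^20 9^27 / 10^30 > 60 per thirty
   coordinates once a factor D <= 2^(d/3) is absorbed.  Raising to the 10th
   (30th) power clears the floor d/10 and the cube root. *)
Lemma small_sets_const_lt d K : 0 < d -> K * 9 ^ (d - d %/ 10) <= 10 ^ d ->
  3 * K < 2 * 2 ^ d.
Proof.
have le_q : 9 * d <= (d - d %/ 10) * 10 by lia.
move=> d_gt0 le_K; rewrite ltnNge; apply/negP => le_Kd.
have le_pow : 2 * 2 ^ d * 9 ^ (d - d %/ 10) <= 3 * 10 ^ d.
  by apply: leq_trans (leq_mul le_Kd (leqnn _)) _; rewrite -mulnA leq_mul2l le_K orbT.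
have [le_d1|lt_1d] := leqP d 1.
  by move: le_pow; have -> : d = 1 by lia.
have num1 : 39 * 10 ^ 10 <= 2 ^ 10 * 9 ^ 9 by lia.
have num2 : 3 ^ 10 < 2 ^ 10 * 39 ^ 2 by lia.
have pos : 0 < 10 ^ 10 by rewrite expn_gt0.
have := @ltn_geometric (2 ^ 10) (3 ^ 10) 39 (2 ^ 10 * 9 ^ 9) (10 ^ 10) d 2
  isT pos lt_1d num1 num2.
rewrite ltnNge => /negP; apply.
apply: (@leq_trans ((2 * 2 ^ d * 9 ^ (d - d %/ 10)) ^ 10)).
  rewrite [(2 ^ 10 * _) ^ d]expnMn [(2 * _ * _) ^ 10]expnMn [(2 * _) ^ 10]expnMn.
  rewrite -[X in _ <= X]mulnA; apply: leq_mul; first exact: leqnn.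
  rewrite [(2 ^ d) ^ 10]expnAC; apply: leq_mul; first exact: leqnn.
  by rewrite -[(9 ^ 9) ^ d]expnM -[(9 ^ _) ^ 10]expnM leq_pexp2l.
apply: leq_trans (leq_wexp2r _ _ 10 le_pow) _.
rewrite [(3 * _) ^ 10]expnMn [(10 ^ d) ^ 10]expnAC; exact: leqnn.
Qed.

Lemma small_sets_rank_lt {d D K} : K * 9 ^ (d - d %/ 10) <= 10 ^ d ->
  13 <= d -> D ^ 3 <= 2 ^ d -> 9 * D * K < 4 * 2 ^ d.
Proof.
have le_q : 27 * d <= (d - d %/ 10) * 30 by lia.
move=> le_K d_ge13 le_D; rewrite ltnNge; apply/negP => le_DK.
have le_pow : 4 * 2 ^ d * 9 ^ (d - d %/ 10) <= 9 * D * 10 ^ d.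
  by apply: leq_trans (leq_mul le_DK (leqnn _)) _; rewrite -mulnA leq_mul2l le_K orbT.
have num1 : 60 * (2 ^ 10 * 10 ^ 30) <= 2 ^ 30 * 9 ^ 27 by lia.
have num2 : 9 ^ 30 < 4 ^ 30 * 60 ^ 13 by lia.
have pos : 0 < 2 ^ 10 * 10 ^ 30 by lia.
have := @ltn_geometric (4 ^ 30) (9 ^ 30) 60 (2 ^ 30 * 9 ^ 27) (2 ^ 10 * 10 ^ 30) d 13
  isT pos d_ge13 num1 num2.
rewrite ltnNge => /negP; apply.
apply: (@leq_trans ((4 * 2 ^ d * 9 ^ (d - d %/ 10)) ^ 30)).
  rewrite [(2 ^ 30 * _) ^ d]expnMn [(4 * _ * _) ^ 30]expnMn [(4 * _) ^ 30]expnMn.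
  rewrite -[X in _ <= X]mulnA; apply: leq_mul; first exact: leqnn.
  rewrite [(2 ^ d) ^ 30]expnAC; apply: leq_mul; first exact: leqnn.
  by rewrite -[(9 ^ 27) ^ d]expnM -[(9 ^ _) ^ 30]expnM leq_pexp2l.
apply: leq_trans (leq_wexp2r _ _ 30 le_pow) _.
rewrite [(9 * D * _) ^ 30]expnMn [(9 * D) ^ 30]expnMn -mulnA.
apply: leq_mul; first exact: leqnn.
rewrite [(2 ^ 10 * _) ^ d]expnMn; apply: leq_mul.
  by rewrite (expnM D 3 10) [(2 ^ 10) ^ d]expnAC leq_wexp2r.
by rewrite [(10 ^ d) ^ 30]expnAC; exact: leqnn.
Qed.

Lemma cube_sqr_exp_succ_le n T d : 0 < n -> 12 * n * T <= d ->
  (((2 ^ n).+1 ^ T) ^ 2) ^ 3 <= 2 ^ d.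
Proof.
move=> n_gt0 le_d.
have le_2n : (2 ^ n).+1 <= 2 ^ (2 * n).
  have : 2 <= 2 ^ n by rewrite -{1}(expn1 2) leq_pexp2l.
  by rewrite mul2n -addnn expnD; nia.
apply: (@leq_trans ((((2 ^ (2 * n)) ^ T) ^ 2) ^ 3)).
  by do 3!apply: leq_wexp2r; exact: le_2n.
by rewrite -!expnM leq_pexp2l //; nia.
Qed.
End Arithmetic.

Definition sqnormc {R : rcfType} (z : R[i]) : R :=
  complex.Re z ^+ 2 + complex.Im z ^+ 2.

Lemma sqnormcE {R : rcfType} (z : R[i]) : (sqnormc z)%:C%C = `|z| ^+ 2.
Proof. exact: add_Re2_Im2. Qed.

Definition accepts {n k : nat} (M : {set 'I_(qreg n k)})
    (decode : basis n k -> option (boolfun n)) (good : pred (boolfun n)) (z : basis n k) : bool :=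
  if decode (outcome M z) is Some h then good h else false.

Section Oracle.
Variables (R : realType) (n k : nat).
Local Notation dim := (dimH n k).
Local Notation QMQ := (@QMQ R n k).

Definition cst_fun (b : bool) : boolfun n := [ffun=> b].

Definition QMQ_flip (x : point n) : 'M[R[i]]_dim :=
  \matrix_(i, j) if xpart (enum_val j) == x
                 then QMQ (cst_fun true) i j - QMQ (cst_fun false) i j else 0.

Lemma QMQ_affine (c : boolfun n) :
  QMQ c = QMQ (cst_fun false) + \sum_x (c x)%:R *: QMQ_flip x.
Proof.
apply/matrixP => i j; rewrite !mxE summxE.
rewrite (bigD1 (xpart (enum_val j))) //= big1 => [|x /negbTE x_neq].
  rewrite !mxE eqxx addr0.
  have -> : qmq_basis c (enum_val j) =
      qmq_basis (cst_fun (c (xpart (enum_val j)))) (enum_val j).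
    by apply/ffunP => l; rewrite !ffunE.
  by case: (c _); rewrite ?mul1r ?mul0r ?addr0 // addrC subrK.
by rewrite !mxE eq_sym x_neq mulr0.
Qed.

Definition sqnorm (v : 'cV[R[i]]_dim) : R[i] := \sum_i `|v i 0| ^+ 2.

Lemma sqnormE v : sqnorm v = ((map_mx (fun z => z^*) v)^T *m v) 0 0.
Proof. by rewrite mxE; apply: eq_bigr => i _; rewrite !mxE normCKC. Qed.

Lemma sqnorm_unitary (U : 'M[R[i]]_dim) v : unitary U -> sqnorm (U *m v) = sqnorm v.
Proof.
move=> /mulmx1C U_unitary.
by rewrite !sqnormE map_mxM trmx_mul -mulmxA (mulmxA _ U) U_unitary mul1mx.
Qed.

Lemma xpart_qmq_basis (c : boolfun n) (z : basis n k) : xpart (qmq_basis c z) = xpart z.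
Proof.
apply/ffunP => i; rewrite !ffunE ifF //; apply/eqP => /(congr1 val) /= i_n.
by move: (ltn_ord i); rewrite i_n ltnn.
Qed.

Lemma qmq_basisK (c : boolfun n) : involutive (@qmq_basis n k c).
Proof.
move=> z; apply/ffunP => i; rewrite ffunE xpart_qmq_basis ffunE.
by case: (i == bqubit n k) => //; rewrite addbK.
Qed.

(* QMQ c is the permutation matrix of the involution qmq_basis c *)
Lemma sqnorm_QMQ (c : boolfun n) v : sqnorm (QMQ c *m v) = sqnorm v.
Proof.
pose s (i : 'I_dim) : 'I_dim := enum_rank (qmq_basis c (enum_val i)).
have sK : involutive s by move=> i; rewrite /s enum_rankK qmq_basisK enum_valK.
have QMQ_s i : (QMQ c *m v) i 0 = v (s i) 0.
  rewrite mxE (bigD1 (s i)) //= big1 ?addr0 => [|j j_neq].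
    by rewrite mxE /s enum_rankK qmq_basisK eqxx mul1r.
  rewrite mxE ifF ?mul0r //; apply: contraNF j_neq => /eqP ij.
  by rewrite /s ij qmq_basisK enum_valK.
rewrite /sqnorm (eq_bigr (fun i => `|v (s i) 0| ^+ 2)) => [|i _]; last by rewrite QMQ_s.
by rewrite [RHS](reindex_inj (inv_inj sK)).
Qed.

Lemma sqnorm_ket0 : sqnorm (ket0 R n k) = 1.
Proof.
rewrite /sqnorm (bigD1 (enum_rank ([ffun=> false] : basis n k))) //= big1 => [|i i_neq].
  by rewrite mxE enum_rankK eqxx normr1 expr1n addr0.
rewrite mxE ifF ?normr0 ?expr0n //; apply: contraNF i_neq => /eqP <-.
by rewrite enum_valK.
Qed.

Lemma sqnorm_run {Us : nat -> 'M[R[i]]_dim} (c : boolfun n) {t} :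
  (forall s, (s <= t)%N -> unitary (Us s)) -> sqnorm (run Us (QMQ c) t) = 1.
Proof.
elim: t => [|t IH] Us_unitary /=.
  by rewrite sqnorm_unitary ?sqnorm_ket0 //; apply: Us_unitary.
rewrite sqnorm_unitary ?sqnorm_QMQ ?IH // => [s le_st|]; apply: Us_unitary => //.
exact: leq_trans le_st _.
Qed.

Section Amplitudes.
Variables (Us : nat -> 'M[R[i]]_dim) (N : nat) (cs : 'I_N -> boolfun n).

Definition amp_mx t : 'M[R[i]]_(N, dim) := \matrix_(a, j) run Us (QMQ (cs a)) t j 0.

Lemma amp_mx_mulmx t (M : 'M[R[i]]_dim) a j :
  (amp_mx t *m M^T) a j = (M *m run Us (QMQ (cs a)) t) j 0.
Proof. by rewrite !mxE; apply: eq_bigr => l _; rewrite !mxE mulrC. Qed.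

Lemma amp_mx_step t :
  amp_mx t.+1 = amp_mx t *m (Us t.+1 *m QMQ (cst_fun false))^T +
    \sum_x diag_mx (\row_a ((cs a x)%:R : R[i])) *m amp_mx t *m (Us t.+1 *m QMQ_flip x)^T.
Proof.
apply/matrixP => a j; rewrite [LHS]mxE /=; set v := run Us _ t.
rewrite QMQ_affine mulmxDl mulmxDr [in RHS]mxE amp_mx_mulmx mulmxA mxE.
congr (_ + _).
rewrite mulmx_suml mulmx_sumr !summxE; apply: eq_bigr => x _.
rewrite -scalemxAl -scalemxAr mxE mulmxA -[in RHS]mulmxA mul_diag_mx.
by rewrite mxE mxE amp_mx_mulmx !mxE.
Qed.

Lemma amp_mx_rank t : (\rank (amp_mx t) <= (2 ^ n).+1 ^ t)%N.
Proof.
elim: t => [|t IH].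
  have -> : amp_mx 0 = const_mx 1 *m (\row_j (Us 0 *m ket0 R n k) j 0).
    by apply/matrixP => a j; rewrite !mxE big_ord1 !mxE mul1r.
  exact: leq_trans (mxrankM_maxl _ _) (rank_leq_col _).
rewrite amp_mx_step expnS mulSn.
apply: leq_trans (mxrank_add _ _) (leq_add (leq_trans (mxrankM_maxl _ _) IH) _).
apply: leq_trans (mxrank_sum_leq _ _) _.
have card_point : #|{: point n}| = (2 ^ n)%N by rewrite card_ffun card_bool card_ord.
rewrite -card_point -sum_nat_const.
apply: leq_sum => x _; apply: leq_trans (mxrankM_maxl _ _) _.
by rewrite card_point; apply: leq_trans (mxrankM_maxr _ _) IH.
Qed.

Definition prob_mx t : 'M[R]_(N, dim) := \matrix_(a, j) sqnormc (amp_mx t a j).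

Lemma prob_mx_rank t : (\rank (prob_mx t) <= ((2 ^ n).+1 ^ t) ^ 2)%N.
Proof.
rewrite -(mxrank_map (real_complex R)).
have -> : map_mx (real_complex R) (prob_mx t) = \matrix_(a, j) `|amp_mx t a j| ^+ 2.
  by apply/matrixP => a j; rewrite !mxE sqnormcE.
by apply: leq_trans (mxrank_sqr_norm _) _; rewrite leq_sqr amp_mx_rank.
Qed.

Lemma prob_mx_row_sum t : (forall s, (s <= t)%N -> unitary (Us s)) ->
  forall a, \sum_j prob_mx t a j = 1.
Proof.
move=> Us_unitary a; apply: (@complexI R).
rewrite rmorph_sum rmorph1 -(sqnorm_run (cs a) Us_unitary).
by apply: eq_bigr => j _; rewrite !mxE; exact: sqnormcE.
Qed.

End Amplitudes.

Lemma success_probE (Us : nat -> 'M[R[i]]_dim) T M decode O good :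
  success_prob Us T M decode O good =
  (\sum_(j | accepts M decode good (enum_val j)) sqnormc (run Us O T j 0))%:C%C.
Proof.
rewrite /success_prob rmorph_sum [RHS]big_mkcond (reindex (@enum_val _ predT)) /=.
  apply: eq_bigr => j _; rewrite /accepts /bidx enum_valK.
  by case: (decode _) => [h|] //=; case: (good h); rewrite ?sqnormcE.
exact/onW_bij/enum_val_bij.
Qed.

End Oracle.

Section ShatteredFamily.
Context {n : nat} {C : {set boolfun n}} {S : {set point n}}.

Lemma shattered_family : shattered C S ->
  exists2 cf : {set 'I_#|S|} -> boolfun n,
    forall U, cf U \in C & forall U i, cf U (enum_val i) = (i \in U).
Proof.
move=> shS.
have /fin_all_exists [cf cfP] : forall U : {set 'I_#|S|},
    exists c : boolfun n, c \in C /\ [set x in S | c x] = enum_val @: U.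
  move=> U; have [|c cC cU] := shS (enum_val @: U); last by exists c.
  by apply/subsetP => _ /imsetP [i _ ->]; exact: enum_valP.
exists cf => [U|U i]; first by case: (cfP U).
have := congr1 (fun A : {set point n} => enum_val i \in A) (cfP U).2.
by rewrite /= inE (mem_imset _ _ enum_val_inj) enum_valP.
Qed.

Variable R : realType.
Context {cf : {set 'I_#|S|} -> boolfun n}.
Hypothesis cfE : forall U i, cf U (enum_val i) = (i \in U).

Lemma card_close_concepts (h : boolfun n) : (0 < #|S|)%N ->
  #|[set a : 'I_#|{set 'I_#|S|}| | rel_dist R S h (cf (enum_val a)) <= 1 / 10]| =
  #|[set W : {set 'I_#|S|} | (10 * #|W| <= #|S|)%N]|.
Proof.
move=> S_gt0.
have distE U : rel_dist R S h (cf U) <= 1 / 10 =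
    (10 * #|[set i | (i \in U) != (i \in [set j | h (enum_val j)])]| <= #|S|)%N.
  rewrite /rel_dist ler_pdivrMr ?ltr0n // mul1r mulrC ler_pdivlMr ?ltr0n //.
  rewrite -natrM ler_nat mulnC -card_enum_val.
  by congr (10 * _ <= _)%N; apply: eq_card => i; rewrite !inE cfE eq_sym.
rewrite -(card_hamming_ball _ [set j | h (enum_val j)] (fun s => 10 * s <= #|S|)%N).
rewrite (card_enum_val _ _ (fun U => rel_dist R S h (cf U) <= 1 / 10)).
by apply: eq_card => U; rewrite !inE distE.
Qed.

End ShatteredFamily.

Arguments prob_mx {R n k} Us {N} cs t.

Section Learner.
Context {R : realType} {n k : nat} {C : {set boolfun n}} {S : {set point n}}.
Context {Us : nat -> 'M[R[i]]_(dimH n k)} {T : nat}.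
Context {M : {set 'I_(qreg n k)}} {decode : basis n k -> option (boolfun n)}.
Hypothesis Us_unitary : forall t, (t <= T)%N -> unitary (Us t).
Hypothesis success : forall c, c \in C ->
  2%:R / 3%:R <= success_prob Us T M decode (@QMQ R n k c)
                   (fun h => rel_dist R S h c <= 1 / 10).
Context {cf : {set 'I_#|S|} -> boolfun n}.
Hypotheses (cfC : forall U, cf U \in C) (cfE : forall U i, cf U (enum_val i) = (i \in U)).
Hypothesis S_gt0 : (0 < #|S|)%N.

Let cs (a : 'I_#|{set 'I_#|S|}|) := cf (enum_val a).
Let P := prob_mx Us cs T.
Let win (j : 'I_(dimH n k)) :=
  [pred a | accepts M decode (fun h => rel_dist R S h (cs a) <= 1 / 10) (enum_val j)].

Let card_set_ord : #|{set 'I_#|S|}| = (2 ^ #|S|)%N.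
Proof. by rewrite card_set card_ord. Qed.

Let P_ge0 a j : 0 <= P a j.
Proof. by rewrite mxE addr_ge0 ?sqr_ge0. Qed.

Let P_row1 a : \sum_j P a j = 1.
Proof. exact: prob_mx_row_sum. Qed.

Let win_card j : (#|win j| <= #|[set W : {set 'I_#|S|} | (10 * #|W| <= #|S|)%N]|)%N.
Proof.
rewrite /win /accepts; case: (decode _) => [h|]; last by rewrite card0.
by rewrite -(card_close_concepts R cfE h S_gt0); apply/eq_leq/eq_card => a; rewrite !inE.
Qed.

Let P_success a : 2 / 3 <= \sum_(j | win j a) P a j.
Proof.
have := success _ (cfC (enum_val a)); rewrite success_probE.
have -> : (2%:R / 3%:R : R[i]) = ((2 / 3 : R)%:C)%C by rewrite fmorph_div !rmorph_nat.
by rewrite lecR => /le_trans; apply; apply: ler_sum => j _; rewrite !mxE.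
Qed.

Lemma learner_rank_bound :
  (4 * 2 ^ #|S| <=
   9 * ((2 ^ n).+1 ^ T) ^ 2 * #|[set W : {set 'I_#|S|} | (10 * #|W| <= #|S|)%N]|)%N.
Proof.
rewrite -card_set_ord.
apply: leq_trans (learning_rank_bound P_ge0 P_row1 win_card P_success) _.
by rewrite leq_mul2r leq_mul2l prob_mx_rank !orbT.
Qed.

(* Needed because for T = 0 the rank bound does not exclude |S| = 1. *)
Lemma learner_const_bound : T = 0 ->
  (2 * 2 ^ #|S| <= 3 * #|[set W : {set 'I_#|S|} | (10 * #|W| <= #|S|)%N]|)%N.
Proof.
move=> T0; rewrite -card_set_ord.
apply: learning_const_bound P_ge0 P_row1 win_card P_success _ => a b j.
by rewrite /P T0 !mxE.
Qed.

End Learner.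

Theorem mainTheorem10 (R : realType) (n : nat) (C : {set boolfun n})
  (S : {set point n}) (d : nat) (k : nat)
  (Us : nat -> 'M[R[i]]_(dimH n k)) (T : nat)
  (M : {set 'I_(qreg n k)}) (decode : basis n k -> option (boolfun n)) :
  #|S| = d ->
  shattered C S ->
  (forall t, (t <= T)%N -> unitary (Us t)) ->
  (forall c, c \in C ->
     success_prob Us T M decode (@QMQ R n k c)
       (fun h => rel_dist R S h c <= 1 / 10) >= 2%:R / 3%:R) ->
  (T%:R : R) >= d%:R / (12 * n)%:R.
Proof.
move=> <- shS Us_unitary success.
(* for n = 0 the right-hand side is d / 0 = 0 *)
have [n0|n_gt0] := posnP n; first by rewrite [in (12 * n)%N]n0 muln0 invr0 mulr0 ler0n.
rewrite ler_pdivrMr ?ltr0n ?muln_gt0 ?n_gt0 // -natrM ler_nat mulnC leqNgt.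
apply/negP => T_lt; have S_gt0 : (0 < #|S|)%N := leq_ltn_trans (leq0n _) T_lt.
have [cf cfC cfE] := shattered_family shS.
have K_le := card_small_sets_le 'I_#|S| 9 10 isT isT; rewrite card_ord in K_le.
have [T0|T_gt0] := posnP T.
  have := learner_const_bound Us_unitary success cfC cfE S_gt0 T0.
  by rewrite leqNgt => /negP; apply; exact: small_sets_const_lt.
have := learner_rank_bound Us_unitary success cfC cfE S_gt0.
rewrite leqNgt => /negP; apply; apply: small_sets_rank_lt K_le _ _.
- by clear -n_gt0 T_gt0 T_lt; lia.
- exact: cube_sqr_exp_succ_le n_gt0 (ltnW T_lt).
Qed.
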